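(* Let $\mathbb{T}$ be a time scale, $\alpha\in(0,1]$, $m\ge 2$ an integer, and $t\in\mathbb{T}^k$. Let $f_1,\dots,f_m:\mathbb{T}\to\mathbb{R}$ each be continuous on $\mathbb{T}^k$ and nabla fractional differentiable of order $\alpha$ at $t$. Then $\prod_{i=1}^m f_i$ is nabla fractional differentiable of order $\alpha$ at $t$ and $$\nabla^{(\alpha)}\Big(\prod_{i=1}^m f_i\Big)(t)=\sum_{i=1}^m\Big(\prod_{1\le j\le i-1}f_j(\rho(t))\cdot\nabla^{(\alpha)}f_i(t)\cdot\prod_{i+1\le j\le m}f_j(t)\Big),$$ with empty products equal to $1$.
   Context: A time scale $\mathbb{T}$ is a nonempty closed subset of $\mathbb{R}$ with the relative topology. For $t\in\mathbb{T}$: $\rho(t)=\sup\{s\in\mathbb{T}:s<t\}$, $\sigma(t)=\inf\{s\in\mathbb{T}:s>t\}$. If $\mathbb{T}$ has a minimum $m_0$ with $\sigma(m_0)>m_0$ then $\mathbb{T}^k=\mathbb{T}\setminus\{m_0\}$, else $\mathbb{T}^k=\mathbb{T}$. $U_\delta(t)=(t-\delta,t+\delta)\cap\mathbb{T}$, $U^-_\delta(t)=(t-\delta,t)\cap\mathbb{T}$. Let $Q=\{1/q: q \text{ an odd positive integer}\}$; for $\alpha\in Q$, $x^\alpha$ is the real $q$-th root. Definition: $h:\mathbb{T}\to\mathbb{R}$ is nabla fractional differentiable of order $\alpha$ at $t\in\mathbb{T}^k$ if there is $L\in\mathbb{R}$ such that for every $\varepsilon>0$ there is $\delta>0$ with $|[h(\rho(t))-h(s)]-L[\rho(t)-s]^\alpha|\le\varepsilon|\rho(t)-s|^\alpha$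 for all $s\in U_\delta(t)$ if $\alpha\in Q$, resp. all $s\in U^-_\delta(t)$ if $\alpha\notin Q$; then $\nabla^{(\alpha)}h(t):=L$. *)

From HB Require Import structures.
From mathcomp Require Import all_boot all_order all_algebra.
From mathcomp Require Import all_classical all_reals all_analysis.
Set Implicit Arguments. Unset Strict Implicit. Unset Printing Implicit Defensive.
Import Order.TTheory GRing.Theory Num.Theory.
Import numFieldNormedType.Exports.
Local Open Scope classical_set_scope.
Local Open Scope ring_scope.

Definition time_scale {R : realType} (T : set R) : Prop :=
  closed T /\ T !=set0.

Definition rho {R : realType} (T : set R) (t : R) : R :=
  if pselect (exists s, T s /\ s < t) then sup [set s | T s /\ s < t] else t.

Definition sigma {R : realType} (T : set R) (t : R) : R :=
  if pselect (exists s, T s /\ t < s) then inf [set s | T s /\ t < s] else t.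

(* T^k : T minus its minimum m0 if that minimum is right-scattered *)
Definition Tk {R : realType} (T : set R) : set R :=
  [set t | T t /\
     ~ ((forall s, T s -> t <= s) /\ t < sigma T t)].

Definition inQ {R : realType} (a : R) : Prop :=
  exists q : nat, odd q /\ a = q%:R^-1.

(* x^a : for x >= 0 the usual power (0^a = 0 for a > 0);
   for x < 0 (only used when a = 1/q, q odd) the real q-th root -((-x)^a). *)
Definition fpow {R : realType} (a x : R) : R :=
  if 0 <= x then x `^ a else - ((- x) `^ a).

Definition nabla_frac_diff {R : realType} (T : set R) (a : R)
  (h : R -> R) (t L : R) : Prop :=
  Tk T t /\
  forall eps : R, 0 < eps -> exists delta : R, 0 < delta /\
    forall s : R, T s -> `|s - t| < delta -> (inQ a \/ s < t) ->
      `|(h (rho T t) - h s) - L * fpow a (rho T t - s)|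
        <= eps * `|rho T t - s| `^ a.

Definition cont_on_Tk {R : realType} (T : set R) (f : R -> R) : Prop :=
  forall x, Tk T x -> forall eps : R, 0 < eps -> exists delta : R, 0 < delta /\
    forall s, T s -> `|s - x| < delta -> `|f s - f x| < eps.

(* Induction on m, peeling off the last factor: the product of the first m+1
   functions is (f_0 ... f_{m-1}) * f_m, and the two-factor product rule
   (fg)' = f' g(t) + f(rho t) g' only asks for continuity of the new right
   factor f_m at t.  The two-factor rule comes from the identity
     (fg)(r) - (fg)(s) - (f' g(t) + f(r) g') P
       = f(r) [g(r) - g(s) - g' P] + g(s) [f(r) - f(s) - f' P] + (g(s) - g(t)) f' P
   with r = rho t and P = (r - s)^a, each term being o(|r - s|^a). *)
From mathcomp Require Import all_boot all_order all_algebra.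
From mathcomp Require Import all_classical all_reals all_analysis.
From mathcomp Require Import ring lra.
Import Order.TTheory GRing.Theory Num.Theory.
Local Open Scope ring_scope.

Section NablaFracDiffProduct.
Variables (R : realType) (T : set R) (a : R).

Definition cont_at_within (g : R -> R) (t : R) : Prop :=
  forall eps : R, 0 < eps -> exists delta : R, 0 < delta /\
    forall s, T s -> `|s - t| < delta -> `|g s - g t| < eps.

Lemma norm_fpow (x : R) : `|fpow a x| = `|x| `^ a.
Proof.
rewrite /fpow; case: ifPn => [x_ge0|].
  by rewrite ger0_norm ?powR_ge0 // ger0_norm.
by rewrite -ltNge => x_lt0; rewrite normrN ger0_norm ?powR_ge0 // ltr0_norm.
Qed.

Lemma nabla_frac_diff_cst (c t : R) :
  Tk T t -> nabla_frac_diff T a (fun=> c) t 0.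
Proof.
move=> Tt; split=> // eps eps_gt0; exists 1; split=> // s _ _ _.
by rewrite subrr mul0r subrr normr0 mulr_ge0 ?powR_ge0 // ltW.
Qed.

Lemma nabla_frac_diffM {f g : R -> R} {t Lf Lg : R} :
  cont_at_within g t ->
  nabla_frac_diff T a f t Lf -> nabla_frac_diff T a g t Lg ->
  nabla_frac_diff T a (f \* g) t (Lf * g t + f (rho T t) * Lg).
Proof.
move=> g_cont [Tt df] [_ dg]; split=> // eps eps_gt0.
set r := rho T t; set K := `|f r| + `|g t| + `|Lf| + 1.
have K_gt0 : 0 < K by rewrite /K; have := normr_ge0 (f r);
  have := normr_ge0 (g t); have := normr_ge0 Lf; lra.
set e := eps / K; have e_gt0 : 0 < e by rewrite divr_gt0.
have epsE : eps = e * K by rewrite /e mulrVK ?unitfE ?gt_eqF.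
have [d1 [d1_gt0 Hf]] := df e e_gt0.
have [d2 [d2_gt0 Hg]] := dg e e_gt0.
have min1e_gt0 : 0 < Num.min 1 e by rewrite lt_min ltr01.
have [d3 [d3_gt0 Hc]] := g_cont _ min1e_gt0.
exists (Num.min d1 (Num.min d2 d3)); split; first by rewrite !lt_min d1_gt0 d2_gt0.
move=> s Ts; rewrite !lt_min => /and3P[sd1 sd2 sd3] sQ.
have {}Hf := Hf s Ts sd1 sQ; have {}Hg := Hg s Ts sd2 sQ.
have /andP[gs_near gs_small] : (`|g s - g t| < 1) && (`|g s - g t| < e).
  by rewrite -lt_min Hc.
rewrite -/r in Hf Hg *; rewrite /=.
set P := fpow a (r - s) in Hf Hg *; set N := `|r - s| `^ a in Hf Hg *.
have PN : `|P| = N by rewrite norm_fpow.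
have N_ge0 : 0 <= N by rewrite powR_ge0.
have gs_le : `|g s| <= `|g t| + 1.
  by have := ler_normD (g s - g t) (g t); rewrite subrK; lra.
have -> : f r * g r - f s * g s - (Lf * g t + f r * Lg) * P =
    f r * (g r - g s - Lg * P) + g s * (f r - f s - Lf * P)
    + (g s - g t) * Lf * P by ring.
apply: (le_trans (ler_normD _ _)).
apply: (le_trans (lerD (ler_normD _ _) (lexx _))); rewrite !normrM PN.
have dg_term : `|f r| * `|g r - g s - Lg * P| <= `|f r| * (e * N).
  by rewrite ler_wpM2l.
have df_term : `|g s| * `|f r - f s - Lf * P| <= (`|g t| + 1) * (e * N).
  by rewrite ler_pM.
have cont_term : `|g s - g t| * `|Lf| * N <= e * `|Lf| * N.
  by rewrite ler_wpM2r // ler_wpM2r // ltW.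
rewrite epsE /K; lra.
Qed.

Lemma nabla_frac_diff_prod (f : nat -> R -> R) (L : nat -> R) (t : R) m :
  Tk T t ->
  (forall i, (i < m)%N -> cont_at_within (f i) t) ->
  (forall i, (i < m)%N -> nabla_frac_diff T a (f i) t (L i)) ->
  nabla_frac_diff T a (fun x => \prod_(0 <= i < m) f i x) t
    (\sum_(0 <= i < m)
       ((\prod_(0 <= j < i) f j (rho T t)) * L i *
        (\prod_(i.+1 <= j < m) f j t))).
Proof.
move=> Tt; elim: m => [|m IH] f_cont f_diff.
  rewrite big_geq //.
  have -> : (fun x => \prod_(0 <= i < 0) f i x) = fun=> 1.
    by apply/funext => x; rewrite big_geq.
  exact: nabla_frac_diff_cst.
have -> : (fun x => \prod_(0 <= i < m.+1) f i x) =
    (fun x => \prod_(0 <= i < m) f i x) \* f m.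
  by apply/funext => x; rewrite big_nat_recr.
have := nabla_frac_diffM (f_cont m (ltnSn m))
  (IH (fun i im => f_cont i (ltnW im)) (fun i im => f_diff i (ltnW im)))
  (f_diff m (ltnSn m)).
congr nabla_frac_diff.
rewrite [RHS]big_nat_recr // (big_geq (leqnn m.+1)) mulr1 big_distrl.
congr (_ + _).
apply: eq_big_nat => i /andP[_ im].
by rewrite [in RHS]big_nat_recr // mulrA.
Qed.

End NablaFracDiffProduct.

Theorem mainTheorem10 (R : realType) (T : set R) (a : R) (m : nat)
  (t : R) (f : nat -> R -> R) (L : nat -> R) :
  time_scale T -> 0 < a -> a <= 1 -> (2 <= m)%N -> Tk T t ->
  (forall i, (i < m)%N -> cont_on_Tk T (f i)) ->
  (forall i, (i < m)%N -> nabla_frac_diff T a (f i) t (L i)) ->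
  nabla_frac_diff T a (fun x => \prod_(0 <= i < m) f i x) t
    (\sum_(0 <= i < m)
       ((\prod_(0 <= j < i) f j (rho T t)) * L i *
        (\prod_(i.+1 <= j < m) f j t))).
Proof.
move=> _ _ _ _ Tt f_cont f_diff.
apply: nabla_frac_diff_prod => // i im.
exact: f_cont i im t Tt.
Qed.
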